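(* Let $p$ be prime, $\mathbb{F}=\mathbb{F}_p$, $K\ge1$, and let $y_{i,j}\in\mathbb{F}^N$ for $i=1,\dots,p-1$, $j=1,\dots,K$. Let $M=\{x\in\mathbb{F}^N:\ \langle x^i,y_{i,j}\rangle=0\text{ for all }i,j\}$. Let $f:\mathbb{F}^N\to\mathbb{F}$ be constant on $M$. Then $$\|f\|_{U^p}\ge\Big(\frac{|M|}{p^N}\Big)^2.$$
   Context: $x^i$ denotes the vector whose coordinates are the $i$-th powers of the coordinates of $x$, and $\langle u,v\rangle=\sum_{t=1}^Nu(t)v(t)$. For $f:\mathbb{F}^N\to\mathbb{F}$, $f_y(x)=f(x+y)-f(x)$, iterated derivatives $f_{y_1\dots y_k}=(f_{y_1\dots y_{k-1}})_{y_k}$, $e(a)=e^{2\pi ia/p}$, and $\|f\|_{U^k}=\big(\mathbb{E}_{x,y_1,\dots,y_k}e(f_{y_1\dots y_k}(x))\big)^{1/2^k}$. *)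

From HB Require Import structures.
From mathcomp Require Import all_boot all_order all_algebra all_field.
Set Implicit Arguments. Unset Strict Implicit. Unset Printing Implicit Defensive.
Import Order.TTheory GRing.Theory Num.Theory.
Local Open Scope ring_scope.

Definition vpow (F : nzRingType) (N : nat) (x : 'rV[F]_N) (i : nat) : 'rV[F]_N :=
  \row_t (x 0 t) ^+ i.

Definition dotv (F : nzRingType) (N : nat) (u v : 'rV[F]_N) : F :=
  \sum_(t < N) u 0 t * v 0 t.

Definition dder (F : zmodType) (N : nat) (f : 'rV[F]_N -> F) (y : 'rV[F]_N)
  : 'rV[F]_N -> F := fun x => f (x + y) - f x.

Definition iter_der (F : zmodType) (N : nat) (f : 'rV[F]_N -> F)
  (ys : seq 'rV[F]_N) : 'rV[F]_N -> F := foldl (@dder F N) f ys.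

(* e(a) = exp(2 pi i a / p), in the algebraic complex numbers algC:
   p.-root (-1) is the p-th root of -1 of minimal argument, i.e. exp(i pi/p). *)
Definition ep (p : nat) (a : 'F_p) : algC := ((p.-root (-1)) ^+ 2) ^+ (val a).

(* ||f||_{U^k} = (E_{x,y_1..y_k} e(f_{y_1..y_k}(x)))^{1/2^k};
   the 2^k-th root is algC's principal root (the nonnegative one on
   nonnegative reals). *)
Definition gowers (p N k : nat) (f : 'rV['F_p]_N -> 'F_p) : algC :=
  (2 ^ k)%N.-root
    ((\sum_(x : 'rV['F_p]_N) \sum_(ys : {ffun 'I_k -> 'rV['F_p]_N})
        ep (iter_der f [seq ys i | i <- enum 'I_k] x))
     / (#|'rV['F_p]_N| ^ k.+1)%:R).

(* M = {x : <x^i, y_{i,j}> = 0 for all i = 1..p-1, j = 1..K};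
   index i : 'I_(p.-1) stands for exponent i.+1. *)
Definition Mset (p N K : nat) (y : 'I_p.-1 -> 'I_K -> 'rV['F_p]_N)
  : {set 'rV['F_p]_N} :=
  [set x | [forall i : 'I_p.-1, forall j : 'I_K,
              dotv (vpow x i.+1) (y i j) == 0]].

From HB Require Import structures.
From mathcomp Require Import all_boot all_order all_algebra all_field.
From mathcomp Require Import ring.
Import Order.TTheory GRing.Theory Num.Theory.
Local Open Scope ring_scope.
Set Implicit Arguments. Unset Strict Implicit.

(* Each constraint x |-> <x^i, y_ij> is a polynomial of degree i <= p - 1, so
   for every coefficient family c the twist g_c = f + sum_ij c_ij <x^i, y_ij>
   has the same U^p norm as f.  Averaging e(g_c) over all c kills every x
   outside M and, f being constant on M, leaves |M| times a unit; hence some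
   c has |E_x e(g_c(x))| >= |M| / p^N.  Finally ||g||_{U^1} <= ||g||_{U^p}
   by iterating Cauchy-Schwarz, and (|M| / p^N)^2 <= |M| / p^N. *)

Section Characters.
Variable p : nat.
Hypothesis hp : prime p.

Let zeta : algC := (p.-root (-1)) ^+ 2.

Lemma val_FpD (a b : 'F_p) : val (a + b) = ((val a + val b) %% p)%N.
Proof. by have /= e := Fp_cast hp; rewrite {3}e. Qed.

Lemma val_Fp1 : val (1 : 'F_p) = 1%N.
Proof. by have /= e := Fp_cast hp; rewrite e modn_small // prime_gt1. Qed.

Lemma zeta_unity : zeta ^+ p = 1.
Proof. by rewrite -exprM mulnC exprM rootCK ?prime_gt0 // sqrrN expr1n. Qed.

Lemma zeta_neq1 : zeta != 1.
Proof.
apply/eqP => /eqP; rewrite sqrf_eq1 => /orP[] /eqP zeta_root.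
  have := rootCK (prime_gt0 hp) (-1 : algC); rewrite zeta_root expr1n => /eqP.
  by rewrite -subr_eq0 opprK -(natrD _ 1 1) pnatr_eq0.
by have := @rootC_lt0 _ p (-1 : algC) (prime_gt1 hp); rewrite zeta_root ltrN10.
Qed.

Lemma epD (a b : 'F_p) : ep (a + b) = ep a * ep b.
Proof. by rewrite /ep val_FpD expr_mod ?zeta_unity // exprD. Qed.

Lemma ep0 : ep (0 : 'F_p) = 1. Proof. by rewrite /ep expr0. Qed.

Lemma ep1 : ep (1 : 'F_p) = zeta. Proof. by rewrite /ep val_Fp1 expr1. Qed.

Lemma norm_ep (a : 'F_p) : `|ep a| = 1.
Proof.
have norm_zeta : `|zeta| = 1.
  by apply/eqP; rewrite -(@pexpr_eq1 _ _ p) ?prime_gt0 // -normrX zeta_unity normr1.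
by rewrite /ep normrX norm_zeta expr1n.
Qed.

Lemma ep_neq0 (a : 'F_p) : ep a != 0. Proof. by rewrite -normr_eq0 norm_ep oner_eq0. Qed.

Lemma epN (a : 'F_p) : ep (- a) = (ep a)^*.
Proof.
apply: (mulIf (ep_neq0 a)); rewrite -epD addNr ep0.
by rewrite mulrC -normCK norm_ep expr1n.
Qed.

Lemma sum_ep : \sum_(c : 'F_p) ep c = 0.
Proof.
have shift : \sum_(c : 'F_p) ep c * zeta = \sum_(c : 'F_p) ep c.
  rewrite [in RHS](reindex_inj (addIr (1 : 'F_p))) /=.
  by apply: eq_bigr => c _; rewrite epD ep1.
have : (\sum_(c : 'F_p) ep c) * (zeta - 1) = 0 by rewrite mulrBr mulr1 mulr_suml shift subrr.
by move/eqP; rewrite mulf_eq0 subr_eq0 (negbTE zeta_neq1) orbF => /eqP.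
Qed.

Lemma sum_ep_mull (a : 'F_p) :
  \sum_(c : 'F_p) ep (c * a) = if a == 0 then p%:R else 0.
Proof.
case: eqP => [->|/eqP a_neq0].
  by under eq_bigr do rewrite mulr0 ep0; rewrite sumr_const card_Fp.
transitivity (\sum_(c : 'F_p) ep c); last exact: sum_ep.
by rewrite [RHS](reindex_inj (mulIf a_neq0)).
Qed.

End Characters.

Section Degree.
Variables (F : comNzRingType) (N : nat).
Local Notation V := 'rV[F]_N.

Fixpoint deg_le (d : nat) (g : V -> F) : Prop :=
  if d is d'.+1 then forall z, deg_le d' (dder g z) else forall x x', g x = g x'.

Lemma eq_deg_le d (g h : V -> F) : g =1 h -> deg_le d g -> deg_le d h.
Proof.
elim: d g h => [|d IH] g h gh /= gP; first by move=> x x'; rewrite -!gh.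
by move=> z; apply: IH (gP z) => x; rewrite /dder !gh.
Qed.

Lemma deg_le_cst d (c : F) : deg_le d (fun _ => c).
Proof. by elim: d c => [|d IH] c //= z; apply: eq_deg_le (IH 0) => x; rewrite /dder subrr. Qed.

Lemma deg_leD d (g h : V -> F) : deg_le d g -> deg_le d h -> deg_le d (fun x => g x + h x).
Proof.
elim: d g h => [|d IH] g h /= gP hP; first by move=> x x'; rewrite (gP x x') (hP x x').
by move=> z; apply: eq_deg_le (IH _ _ (gP z) (hP z)) => x; rewrite /dder addrACA opprD.
Qed.

Lemma deg_leMl d (c : F) (g : V -> F) : deg_le d g -> deg_le d (fun x => c * g x).
Proof.
elim: d g => [|d IH] g /= gP; first by move=> x x'; rewrite (gP x x').
by move=> z; apply: eq_deg_le (IH _ (gP z)) => x; rewrite /dder mulrBr.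
Qed.

Lemma deg_le_sum d (I : Type) (r : seq I) (G : I -> V -> F) :
  (forall i, deg_le d (G i)) -> deg_le d (fun x => \sum_(i <- r) G i x).
Proof.
move=> GP; elim: r => [|i r IH].
  by apply: eq_deg_le (deg_le_cst d 0) => x; rewrite big_nil.
by apply: eq_deg_le (deg_leD (GP i) IH) => x; rewrite big_cons.
Qed.

Lemma deg_leS d (g : V -> F) : deg_le d g -> deg_le d.+1 g.
Proof.
elim: d g => [|d IH] g /= gP z; last exact: IH.
by move=> x x'; rewrite /dder (gP (x + z) x) (gP (x' + z) x') !subrr.
Qed.

Lemma deg_le_leq d d' (g : V -> F) : (d <= d')%N -> deg_le d g -> deg_le d' g.
Proof. by move=> /subnK <-; elim: (d' - d)%N => //= k IH /IH /deg_leS. Qed.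

Lemma deg_le_coord_exp (t : 'I_N) i : deg_le i (fun x : V => x 0 t ^+ i).
Proof.
elim: i {-2}i (leqnn i) => [|n IH] i.
  by rewrite leqn0 => /eqP ->; apply: deg_le_cst.
rewrite leq_eqVlt => /orP[/eqP -> z /=|]; last exact: IH.
(* binomial expansion: the top term x_t^(n+1) cancels in the derivative *)
pose G (j : 'I_n.+1) (x : V) := (z 0 t ^+ j.+1 *+ 'C(n.+1, j.+1)) * x 0 t ^+ (n - j).
apply: (@eq_deg_le _ (fun x => \sum_(j <- index_enum _) G j x)).
  move=> x; rewrite /dder mxE exprDn [in RHS]big_ord_recl /=.
  rewrite subn0 expr0 mulr1 bin0 mulr1n addrC addKr.
  by apply: eq_bigr => j _; rewrite /G mulrnAl mulrC.
apply: deg_le_sum => j; apply/deg_leMl/(deg_le_leq (leq_subr j n)); exact: IH (leq_subr j n).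
Qed.

Lemma eq_iter_der (g h : V -> F) s : g =1 h -> iter_der g s =1 iter_der h s.
Proof.
elim: s g h => [|z s IH] g h gh //=.
by apply: IH => x; rewrite /dder !gh.
Qed.

Lemma iter_derD (g h : V -> F) s x :
  iter_der (fun x => g x + h x) s x = iter_der g s x + iter_der h s x.
Proof.
elim: s g h x => [|z s IH] g h x //=.
by rewrite -IH; apply: eq_iter_der => u; rewrite /dder addrACA opprD.
Qed.

Lemma deg_le_iter_der d (g : V -> F) s : deg_le (size s + d) g -> deg_le d (iter_der g s).
Proof. by elim: s g => [|z s IH] g //= gP; apply: IH (gP z). Qed.

Lemma iter_der_eq0 d (g : V -> F) s x : deg_le d g -> (d < size s)%N -> iter_der g s x = 0.
Proof.
case/lastP: s => [|s z] // gP; rewrite size_rcons ltnS => le_ds.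
have /= cst : deg_le 0 (iter_der g s).
  by apply: deg_le_iter_der; rewrite addn0; apply: deg_le_leq gP.
by rewrite /iter_der foldl_rcons -/(iter_der g s) /dder (cst (x + z) x) subrr.
Qed.

End Degree.

Lemma big_ffun_rcons (V : finType) (R : nmodType) k (G : seq V -> R) :
  \sum_(ys : {ffun 'I_k.+1 -> V}) G [seq ys i | i <- enum 'I_k.+1] =
  \sum_(ys : {ffun 'I_k -> V}) \sum_(z : V) G (rcons [seq ys i | i <- enum 'I_k] z).
Proof.
rewrite pair_big /=.
pose h (q : {ffun 'I_k -> V} * V) : {ffun 'I_k.+1 -> V} :=
  [ffun i => if unlift ord_max i is Some j then q.1 j else q.2].
rewrite (reindex h) /=; last first.
  exists (fun ys => ([ffun j => ys (lift ord_max j)], ys ord_max)) => [[ys z] _|ys _].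
    by rewrite /h ffunE unlift_none; congr (_, _); apply/ffunP => j; rewrite !ffunE liftK.
  by apply/ffunP => i; rewrite /h ffunE; case: unliftP => [j ->|->] //=; rewrite ffunE.
apply: eq_bigr => -[ys z] _; congr G.
rewrite enum_ordSr map_rcons -map_comp /= ffunE unlift_none; congr rcons.
apply: eq_map => j /=; rewrite ffunE.
have -> : widen_ord (leqnSn k) j = lift ord_max j.
  by apply: val_inj; rewrite /= /bump leqNgt ltn_ord.
by rewrite liftK.
Qed.

Lemma sqr_sum_le (R : numDomainType) (I : finType) (a : I -> R) :
  (forall i, 0 <= a i) -> (\sum_i a i) ^+ 2 <= (\sum_i a i ^+ 2) *+ #|I|.
Proof.
move=> a_ge0.
have amgm i j : a i * a j *+ 2 <= a i ^+ 2 + a j ^+ 2.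
  have : 0 <= (a i - a j) ^+ 2 by rewrite -realEsqr rpredB // ger0_real.
  by rewrite sqrrB addrAC subr_ge0.
rewrite -(ler_pMn2r (n := 2%N)) //.
have -> : (\sum_i a i) ^+ 2 *+ 2 = \sum_i \sum_j a i * a j *+ 2.
  rewrite expr2 mulr_suml -sumrMnl; apply: eq_bigr => i _.
  by rewrite mulr_sumr -sumrMnl.
apply: le_trans (_ : \sum_i \sum_j (a i ^+ 2 + a j ^+ 2) <= _).
  by do 2![apply: ler_sum => ? _]; apply: amgm.
under eq_bigr do rewrite big_split /= sumr_const.
by rewrite big_split /= sumr_const -sumrMnl mulr2n.
Qed.

Lemma exists_norm_ge (R : numDomainType) (I : finType) (T : I -> R) (m : R) :
  (0 < #|I|)%N -> 0 <= m -> `|\sum_i T i| = m *+ #|I| -> exists i, m <= `|T i|.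
Proof.
move=> /card_gt0P[i0 _] m_ge0 normT.
case: (boolP [exists i, m <= `|T i|]) => [/existsP //|/existsPn small].
have : \sum_i `|T i| < \sum_(i : I) m.
  apply: ltr_sum => [|i _]; first by apply/hasP; exists i0; rewrite ?mem_index_enum.
  by rewrite real_ltNge ?normr_real ?ger0_real ?small.
by rewrite sumr_const -normT => /(le_lt_trans (ler_norm_sum _ _ _)); rewrite ltxx.
Qed.

Section Gowers.
Variables (p N : nat).
Hypothesis hp : prime p.
Local Notation V := 'rV['F_p]_N.
Local Notation n := (#|V|%:R : algC).

Definition gowers_sum k (g : V -> 'F_p) : algC :=
  \sum_(x : V) \sum_(ys : {ffun 'I_k -> V}) ep (iter_der g [seq ys i | i <- enum 'I_k] x).

Definition gowers_avg k (g : V -> 'F_p) : algC := gowers_sum k g / n ^+ k.+1.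

Lemma gowersE k (g : V -> 'F_p) : gowers k g = (2 ^ k).-root (gowers_avg k g).
Proof. by rewrite /gowers /gowers_avg natrX. Qed.

Lemma gowers_avg0 (g : V -> 'F_p) : gowers_avg 0 g = (\sum_(x : V) ep (g x)) / n.
Proof.
rewrite /gowers_avg /gowers_sum expr1; congr (_ / _); apply: eq_bigr => x _.
have -> : enum 'I_0 = [::] by apply: size0nil; rewrite size_enum_ord.
by rewrite sumr_const card_ffun card_ord expn0.
Qed.

Lemma sum_ep_dder (h : V -> 'F_p) :
  \sum_(z : V) \sum_(x : V) ep (dder h z x) = `|\sum_(x : V) ep (h x)| ^+ 2.
Proof.
rewrite normCKC exchange_big rmorph_sum mulr_suml /=; apply: eq_bigr => x _.
rewrite mulr_sumr [in RHS](reindex_inj (addrI x)) /=; apply: eq_bigr => z _.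
by rewrite /dder epD // epN // mulrC.
Qed.

Lemma gowers_sumS k (g : V -> 'F_p) : gowers_sum k.+1 g =
  \sum_(ys : {ffun 'I_k -> V}) `|\sum_(x : V) ep (iter_der g [seq ys i | i <- enum 'I_k] x)| ^+ 2.
Proof.
rewrite /gowers_sum exchange_big /=.
rewrite (big_ffun_rcons k (fun s => \sum_(x : V) ep (iter_der g s x))).
apply: eq_bigr => ys _; rewrite -sum_ep_dder; apply: eq_bigr => z _.
by apply: eq_bigr => x _; rewrite /iter_der foldl_rcons.
Qed.

Lemma sqr_norm_gowers_sum_le k (g : V -> 'F_p) :
  `|gowers_sum k g| ^+ 2 <= (#|V| ^ k)%:R * gowers_sum k.+1 g.
Proof.
rewrite gowers_sumS /gowers_sum exchange_big /=.
set W := fun ys : {ffun 'I_k -> V} => \sum_(x : V) ep (iter_der g [seq ys i | i <- enum 'I_k] x).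
apply: le_trans (_ : (\sum_ys `|W ys|) ^+ 2 <= _).
  by rewrite lerXn2r ?nnegrE ?sumr_ge0 // ler_norm_sum.
apply: le_trans (sqr_sum_le _) _ => //.
by rewrite card_ffun card_ord mulr_natl.
Qed.

Lemma card_V_gt0 : 0 < n.
Proof. by rewrite ltr0n card_mx (card_Fp hp) expn_gt0 prime_gt0. Qed.

Lemma sqr_norm_gowers_avg_le k (g : V -> 'F_p) : `|gowers_avg k g| ^+ 2 <= gowers_avg k.+1 g.
Proof.
have n_neq0 : n != 0 by rewrite gt_eqF ?card_V_gt0.
rewrite /gowers_avg normrM normfV normrX normr_nat exprMn exprVn -exprM.
have -> : gowers_sum k.+1 g / n ^+ k.+2 = n ^+ k * gowers_sum k.+1 g / n ^+ (k.+1 * 2).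
  have -> : (k.+1 * 2 = k + k.+2)%N by rewrite muln2 -addnn !addSn !addnS.
  rewrite exprD; field.
  by rewrite !expf_neq0.
by rewrite ler_pM2r ?invr_gt0 ?exprn_gt0 ?card_V_gt0 // -natrX sqr_norm_gowers_sum_le.
Qed.

Lemma gowers_avg_ge0 k (g : V -> 'F_p) : (0 < k)%N -> 0 <= gowers_avg k g.
Proof.
case: k => // k _; apply: le_trans (sqr_norm_gowers_avg_le k g).
by rewrite exprn_ge0.
Qed.

Lemma exp_norm_gowers_avg_le k (g : V -> 'F_p) :
  `|gowers_avg 0 g| ^+ (2 ^ k) <= `|gowers_avg k g|.
Proof.
elim: k => [|k IH]; first by rewrite expn0 expr1.
rewrite [leRHS]ger0_norm ?gowers_avg_ge0 //; apply: le_trans (sqr_norm_gowers_avg_le k g).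
by rewrite expnS mulnC exprM lerXn2r ?nnegrE ?exprn_ge0.
Qed.

Lemma norm_mean_le_gowers k (g : V -> 'F_p) :
  (0 < k)%N -> `|\sum_(x : V) ep (g x)| / n <= gowers k g.
Proof.
move=> k_gt0; have two_k_gt0 : (0 < 2 ^ k)%N by rewrite expn_gt0.
have -> : `|\sum_(x : V) ep (g x)| / n = `|gowers_avg 0 g|.
  by rewrite gowers_avg0 normrM normfV normr_nat.
rewrite gowersE -{1}(exprCK two_k_gt0 (normr_ge0 (gowers_avg 0 g))).
rewrite ler_rootCl ?nnegrE ?exprn_ge0 ?gowers_avg_ge0 //.
by rewrite -(ger0_norm (gowers_avg_ge0 g k_gt0)) exp_norm_gowers_avg_le.
Qed.

Lemma gowers_addr_deg_le k (f h : V -> 'F_p) :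
  (0 < k)%N -> deg_le k.-1 h -> gowers k (fun x => f x + h x) = gowers k f.
Proof.
move=> k_gt0 hP; rewrite !gowersE /gowers_avg /gowers_sum; congr (_.-root (_ / _)).
apply: eq_bigr => x _; apply: eq_bigr => ys _; congr ep.
rewrite iter_derD (iter_der_eq0 _ hP) ?addr0 //.
by rewrite size_map size_enum_ord prednK.
Qed.

End Gowers.

Section Constraints.
Variables (p N K : nat).
Hypothesis hp : prime p.
Variable y : 'I_p.-1 -> 'I_K -> 'rV['F_p]_N.
Local Notation V := 'rV['F_p]_N.
Local Notation I := ('I_p.-1 * 'I_K)%type.

Definition constraint (ij : I) (x : V) : 'F_p := dotv (vpow x ij.1.+1) (y ij.1 ij.2).

Definition constraint_comb (c : {ffun I -> 'F_p}) (x : V) : 'F_p :=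
  \sum_(ij : I) c ij * constraint ij x.

Lemma deg_le_constraint_comb c : deg_le p.-1 (constraint_comb c).
Proof.
apply: deg_le_sum => -[i j]; apply: deg_leMl.
apply: (@eq_deg_le _ _ _ (fun x => \sum_(t <- index_enum 'I_N) y i j 0 t * x 0 t ^+ i.+1)).
  by move=> x; rewrite /constraint /dotv; apply: eq_bigr => t _; rewrite mxE mulrC.
by apply: deg_le_sum => t; apply/deg_leMl/(deg_le_leq (ltn_ord i))/deg_le_coord_exp.
Qed.

Lemma mem0_Mset : (0 : V) \in Mset y.
Proof.
rewrite inE; apply/forallP => i; apply/forallP => j; rewrite /dotv big1 // => t _.
by rewrite !mxE expr0n mul0r.
Qed.

(* Character orthogonality, one coordinate of c at a time. *)
Lemma sum_ep_constraint_comb x : \sum_(c : {ffun I -> 'F_p}) ep (constraint_comb c x) =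
  if x \in Mset y then (p ^ #|{: I}|)%:R else 0.
Proof.
under eq_bigr do rewrite /constraint_comb (big_morph _ (epD hp) (@ep0 p)).
rewrite -(bigA_distr_bigA (fun ij a => ep (a * constraint ij x))) /=.
under eq_bigr do rewrite sum_ep_mull //.
case: ifP => [|/negbT]; rewrite inE.
  move=> /forallP xM; rewrite natrX -prodr_const; apply: eq_bigr => -[i j] _.
  by rewrite /constraint /= (eqP (forallP (xM i) j)) eqxx.
rewrite negb_forall => /existsP[i]; rewrite negb_forall => /existsP[j] xNM.
by rewrite (bigD1 (i, j)) //= /constraint /= (negbTE xNM) mul0r.
Qed.

Lemma exists_constraint_comb_large_mean (f : V -> 'F_p) :
  {in Mset y &, forall x x', f x = f x'} ->
  exists c : {ffun I -> 'F_p},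
    (#|Mset y|)%:R <= `|\sum_(x : V) ep (f x + constraint_comb c x)|.
Proof.
move=> f_cst; apply: exists_norm_ge; rewrite ?card_ffun ?expn_gt0 ?card_Fp ?prime_gt0 //.
have -> : \sum_(c : {ffun I -> 'F_p}) \sum_(x : V) ep (f x + constraint_comb c x) =
          \sum_(x in Mset y) (p ^ #|{: I}|)%:R * ep (f 0).
  rewrite exchange_big [RHS]big_mkcond /=; apply: eq_bigr => x _.
  under eq_bigr do rewrite epD //.
  rewrite -mulr_sumr sum_ep_constraint_comb; case: ifP => [xM|_]; last by rewrite mulr0.
  by rewrite (f_cst x 0) ?mem0_Mset // mulrC.
by rewrite sumr_const normrMn normrM norm_ep // mulr1 normr_nat -!mulrnA mulnC.
Qed.

End Constraints.

Theorem proposition2p8 (p N K : nat) (hp : prime p) (hK : (0 < K)%N)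
  (y : 'I_p.-1 -> 'I_K -> 'rV['F_p]_N) (f : 'rV['F_p]_N -> 'F_p) :
  (forall x x', x \in Mset y -> x' \in Mset y -> f x = f x') ->
  ((#|Mset y|)%:R / (p ^ N)%:R) ^+ 2 <= gowers p f :> algC.
Proof.
move=> f_cst.
have [c large_mean] := exists_constraint_comb_large_mean hp f_cst.
have card_V : #|'rV['F_p]_N| = (p ^ N)%N by rewrite card_mx card_Fp // mul1n.
set m := (#|Mset y|)%:R / (p ^ N)%:R : algC.
have pN_gt0 : (0 : algC) < (p ^ N)%:R by rewrite ltr0n expn_gt0 prime_gt0.
have m_ge0 : 0 <= m by rewrite divr_ge0 ?ler0n.
have m_le1 : m <= 1 by rewrite ler_pdivrMr // mul1r ler_nat -card_V max_card.
rewrite -(gowers_addr_deg_le f (prime_gt0 hp) (deg_le_constraint_comb y c)).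
apply: le_trans (_ : m <= _); first by rewrite expr2 ler_piMr.
apply: le_trans (norm_mean_le_gowers hp _ (prime_gt0 hp)).
by rewrite card_V ler_pM2r ?invr_gt0.
Qed.
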